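(* Let $n,k$ be positive integers. There exists a $k$--$\mathrm{MOFR}(2,2n;2)$ if and only if there exists an orthogonal array $\mathrm{OA}(2n,k,2,2)$.
   Context: A frequency rectangle of type $\mathrm{FR}(m,n;q)$ is an $m\times n$ array on a symbol set of size $q$ in which each symbol appears exactly $n/q$ times in each row and $m/q$ times in each column. Two frequency rectangles of the same type are orthogonal if upon superimposition each of the $q^2$ ordered pairs of symbols appears the same number of times. A $k$--$\mathrm{MOFR}(m,n;q)$ is a set of $k$ pairwise orthogonal frequency rectangles of type $\mathrm{FR}(m,n;q)$. An orthogonal array $\mathrm{OA}(N,k,q,t)$ is an $N\times k$ array on a symbol set of size $q$ such that in every $N\times t$ subarray each ordered $t$-tuple of symbols appears as a row the same number of times. *)

From mathcomp Require Import all_boot all_algebra.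
Set Implicit Arguments.
Unset Strict Implicit.
Unset Printing Implicit Defensive.

Definition is_FR (m n q : nat) (A : 'M['I_q]_(m, n)) : Prop :=
  (forall (i : 'I_m) (s : 'I_q), #|[set j : 'I_n | A i j == s]| = n %/ q) /\
  (forall (j : 'I_n) (s : 'I_q), #|[set i : 'I_m | A i j == s]| = m %/ q).

Definition FR_orthogonal (m n q : nat) (A B : 'M['I_q]_(m, n)) : Prop :=
  exists lambda : nat, forall a b : 'I_q,
    #|[set c : 'I_m * 'I_n | (A c.1 c.2 == a) && (B c.1 c.2 == b)]| = lambda.

Definition is_MOFR (k m n q : nat) (F : 'I_k -> 'M['I_q]_(m, n)) : Prop :=
  (forall l, is_FR (F l)) /\
  (forall l l', l != l' -> FR_orthogonal (F l) (F l')).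

Definition exists_MOFR (k m n q : nat) : Prop :=
  exists F : 'I_k -> 'M['I_q]_(m, n), is_MOFR F.

Definition is_OA (N k q t : nat) (A : 'M['I_q]_(N, k)) : Prop :=
  forall c : 'I_t -> 'I_k,
    (forall u v : 'I_t, u < v -> c u < c v) ->
    exists lambda : nat, forall tup : 'I_t -> 'I_q,
      #|[set r : 'I_N | [forall u : 'I_t, A r (c u) == tup u]]| = lambda.

Definition exists_OA (N k q t : nat) : Prop :=
  exists A : 'M['I_q]_(N, k), is_OA t A.

From mathcomp Require Import all_boot all_algebra zify.
Set Implicit Arguments. Unset Strict Implicit. Unset Printing Implicit Defensive.

(* A rectangle of type FR(2,2n;2) has one of each symbol in every column, so it
   is a binary word x of weight n stacked on its complement.  Superimposing the
   rectangles of x and y yields the pair (a,b) exactly N(a,b) + N(~a,~b) times,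
   where N(a,b) counts the positions with x = a and y = b.  For two words of
   weight n the row sums of N force N(0,1) = N(1,0) = n - N(0,0) = n - N(1,1),
   so orthogonality holds iff all four N(a,b) are equal, i.e. iff x and y are
   orthogonal columns of a binary OA of strength 2.  Conversely two such columns
   force each other to have weight n.  For k <= 1 the OA condition is vacuous
   and the word 0^n 1^n gives the MOFR. *)

Lemma ord2_cases (s : 'I_2) : s = ord0 \/ s = ord_max.
Proof. by case: s => [[|[|//]] ?]; [left | right]; apply: val_inj. Qed.

Lemma forall_ord2 (P : pred 'I_2) : [forall u, P u] = P ord0 && P ord_max.
Proof.
apply/forallP/andP => [P_all | [P0 P1] u]; first by split; apply: P_all.
by have [->|->] := ord2_cases u.
Qed.

Lemma lift0_ord2 : lift ord0 ord0 = ord_max :> 'I_2.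
Proof. exact: val_inj. Qed.

Lemma card_ord2 (P : pred 'I_2) : #|[set i | P i]| = P ord0 + P ord_max.
Proof.
rewrite -sum1dep_card big_mkcond big_ord_recl big_ord1 lift0_ord2 /=.
by case: (P ord0); case: (P ord_max).
Qed.

Lemma card_ord2_pairs m (P : 'I_2 -> 'I_m -> bool) :
  #|[set c : 'I_2 * 'I_m | P c.1 c.2]| =
  #|[set j | P ord0 j]| + #|[set j | P ord_max j]|.
Proof.
rewrite -!sum1dep_card -(pair_big_dep xpredT P (fun _ _ => 1)) /=.
by rewrite big_ord_recl big_ord1 lift0_ord2.
Qed.

Lemma rev_ord_eq q (s t : 'I_q) : (rev_ord s == t) = (s == rev_ord t).
Proof. exact: (can2_eq (@rev_ordK q) (@rev_ordK q)). Qed.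

Lemma rev_ord0 n : rev_ord (ord0 : 'I_n.+1) = ord_max.
Proof. by apply: val_inj; rewrite /= subn1. Qed.

Lemma rev_ord_max n : rev_ord (ord_max : 'I_n.+1) = ord0.
Proof. by apply: val_inj; rewrite /= subnn. Qed.

Section Words.
Variables m q : nat.
Implicit Types (x y : 'I_m -> 'I_q) (a b s : 'I_q).

Definition symbol_count x s := #|[set j | x j == s]|.

Definition pair_count x y a b := #|[set j | (x j == a) && (y j == b)]|.

Definition pair_uniform x y := exists lambda, forall a b, pair_count x y a b = lambda.

Lemma pair_countC x y a b : pair_count x y a b = pair_count y x b a.
Proof. by apply: eq_card => j; rewrite !inE andbC. Qed.

Lemma pair_uniformC x y : pair_uniform x y -> pair_uniform y x.
Proof. by case=> lambda count_xy; exists lambda => a b; rewrite pair_countC. Qed.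

Lemma eq_pair_uniform x x' y y' :
  x =1 x' -> y =1 y' -> pair_uniform x y -> pair_uniform x' y'.
Proof.
move=> eq_x eq_y [lambda count_xy]; exists lambda => a b; rewrite -(count_xy a b).
by apply: eq_card => j; rewrite !inE eq_x eq_y.
Qed.

End Words.

Section BinaryWords.
Variable m : nat.
Implicit Types (x y : 'I_m -> 'I_2) (a b : 'I_2).

Lemma card_split_ord2 (P : pred 'I_m) (f : 'I_m -> 'I_2) :
  #|[set j | P j]| =
  #|[set j | P j && (f j == ord0)]| + #|[set j | P j && (f j == ord_max)]|.
Proof.
rewrite -(cardsID [set j | f j == ord0]); congr (_ + _); apply: eq_card => j.
  by rewrite !inE andbC.
by rewrite !inE andbC; case/ord2_cases: (f j) => ->.
Qed.

Lemma symbol_count_sum x : symbol_count x ord0 + symbol_count x ord_max = m.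
Proof. by rewrite -[RHS]card_ord -cardsT (card_split_ord2 _ x). Qed.

Lemma symbol_count_pairs_l x y a :
  symbol_count x a = pair_count x y a ord0 + pair_count x y a ord_max.
Proof. exact: card_split_ord2. Qed.

Lemma symbol_count_pairs_r x y b :
  symbol_count y b = pair_count x y ord0 b + pair_count x y ord_max b.
Proof. by rewrite !(pair_countC x y); apply: symbol_count_pairs_l. Qed.

End BinaryWords.

Lemma pair_uniform_of_balanced_compl_sums n (x y : 'I_(2 * n) -> 'I_2) lambda :
  (forall s, symbol_count x s = n) -> (forall s, symbol_count y s = n) ->
  (forall a b, pair_count x y a b + pair_count x y (rev_ord a) (rev_ord b) = lambda) ->
  pair_uniform x y.
Proof.
move=> x_bal y_bal compl_sums; exists (pair_count x y ord0 ord0) => a b.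
have := compl_sums ord0 ord0; have := compl_sums ord0 ord_max.
have := x_bal ord0; have := x_bal ord_max; have := y_bal ord0.
rewrite (symbol_count_pairs_r x) !(symbol_count_pairs_l _ y) !(rev_ord0, rev_ord_max).
by have [->|->] := ord2_cases a; have [->|->] := ord2_cases b; lia.
Qed.

Lemma symbol_count_of_pair_uniform n (x y : 'I_(2 * n) -> 'I_2) s :
  pair_uniform x y -> symbol_count x s = n.
Proof.
case=> lambda uniform; have := symbol_count_sum x.
by rewrite !(symbol_count_pairs_l x y) !uniform; lia.
Qed.

Definition row_and_compl m (x : 'I_m -> 'I_2) : 'M['I_2]_(2, m) :=
  \matrix_(i, j) if i == ord0 then x j else rev_ord (x j).

Lemma FR2_row_and_compl m (A : 'M['I_2]_(2, m)) :
  is_FR A -> A = row_and_compl (A ord0).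
Proof.
case=> _ /= col_count; apply/matrixP => i j; rewrite mxE.
have [->|->] := ord2_cases i => //=.
have := col_count j (A ord0 j); rewrite card_ord2 eqxx.
by have [->|->] := ord2_cases (A ord0 j); have [->|->] := ord2_cases (A ord_max j);
  rewrite ?eqxx ?rev_ord0 ?rev_ord_max.
Qed.

Lemma is_FR_row_and_compl n (x : 'I_(2 * n) -> 'I_2) :
  is_FR (row_and_compl x) <-> forall s, symbol_count x s = n.
Proof.
have row0 s : #|[set j | row_and_compl x ord0 j == s]| = symbol_count x s.
  by apply: eq_card => j; rewrite !inE mxE.
have row1 s :
    #|[set j | row_and_compl x ord_max j == s]| = symbol_count x (rev_ord s).
  by apply: eq_card => j; rewrite !inE mxE rev_ord_eq.
rewrite /is_FR mulKn //; split=> [[row_count _] s | x_bal].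
  by rewrite -row0; apply: row_count.
split=> [i s | j s]; first by have [->|->] := ord2_cases i; rewrite ?row0 ?row1.
rewrite card_ord2 !mxE /= rev_ord_eq.
by have [->|->] := ord2_cases s; have [->|->] := ord2_cases (x j);
  rewrite ?eqxx ?rev_ord0 ?rev_ord_max.
Qed.

Lemma card_row_and_compl_pairs m (x y : 'I_m -> 'I_2) a b :
  #|[set c | (row_and_compl x c.1 c.2 == a) && (row_and_compl y c.1 c.2 == b)]| =
  pair_count x y a b + pair_count x y (rev_ord a) (rev_ord b).
Proof.
rewrite (card_ord2_pairs
  (fun i j => (row_and_compl x i j == a) && (row_and_compl y i j == b))).
by congr (_ + _); apply: eq_card => j; rewrite !inE !mxE /= ?rev_ord_eq.
Qed.

Lemma is_OA2_pair_uniform N k q (A : 'M['I_q]_(N, k)) :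
  is_OA 2 A <->
  forall l l' : 'I_k, l < l' -> pair_uniform (fun r => A r l) (fun r => A r l').
Proof.
split=> [OA_A l l' lt_ll' | uniform c c_incr].
  pose c (u : 'I_2) := if u == ord0 then l else l'.
  have [|lambda count_c] := OA_A c.
    by move=> u v; have [->|->] := ord2_cases u; have [->|->] := ord2_cases v.
  exists lambda => a b; rewrite -(count_c (fun u => if u == ord0 then a else b)).
  by apply: eq_card => r; rewrite !inE forall_ord2.
have [lambda count_c] := uniform _ _ (c_incr ord0 ord_max isT).
exists lambda => tup; rewrite -(count_c (tup ord0) (tup ord_max)).
by apply: eq_card => r; rewrite !inE forall_ord2.
Qed.

Lemma exists_OA_of_MOFR n k : exists_MOFR k 2 (2 * n) 2 -> exists_OA (2 * n) k 2 2.
Proof.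
case=> F [FR_F orth_F]; pose x l := F l ord0.
have F_row l : F l = row_and_compl (x l) := FR2_row_and_compl (FR_F l).
have x_bal l : forall s, symbol_count (x l) s = n.
  by apply/is_FR_row_and_compl; rewrite -F_row.
exists (\matrix_(r, l) x l r)%R; apply/is_OA2_pair_uniform => l l' lt_ll'.
have [|lambda orth] := orth_F l l'; first by rewrite neq_ltn lt_ll'.
apply: (@eq_pair_uniform _ _ (x l) _ (x l')) => [r | r | ]; rewrite ?mxE //.
apply: (pair_uniform_of_balanced_compl_sums (lambda := lambda)) => // a b.
by rewrite -card_row_and_compl_pairs -!F_row; exact: orth.
Qed.

Lemma card_ltn_ord m n : n <= m -> #|[set r : 'I_m | r < n]| = n.
Proof.
move=> le_nm; have widen_inj : injective (widen_ord le_nm).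
  by move=> i j [] /val_inj.
rewrite -[RHS]card_ord -(card_imset _ widen_inj).
apply: eq_card => r; rewrite inE; apply/idP/imsetP => [lt_rn | [i _ ->]].
  by exists (Ordinal lt_rn) => //; apply: val_inj.
exact: (ltn_ord i).
Qed.

Definition zeros_then_ones n : 'I_(2 * n) -> 'I_2 :=
  fun r => if r < n then ord0 else ord_max.
Arguments zeros_then_ones : clear implicits.

Lemma symbol_count_zeros_then_ones n s : symbol_count (zeros_then_ones n) s = n.
Proof.
have count0 : symbol_count (zeros_then_ones n) ord0 = n.
  rewrite -[RHS](@card_ltn_ord (2 * n)) ?leq_pmull //.
  by apply: eq_card => r; rewrite !inE /zeros_then_ones; case: (r < n).
have := symbol_count_sum (zeros_then_ones n).
by have [->|->] := ord2_cases s; lia.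
Qed.

Lemma exists_MOFR_of_OA n k : exists_OA (2 * n) k 2 2 -> exists_MOFR k 2 (2 * n) 2.
Proof.
case=> A /is_OA2_pair_uniform A_pairs.
have uniform l l' : l != l' -> pair_uniform (fun r => A r l) (fun r => A r l').
  by rewrite neq_ltn => /orP[/A_pairs // | /A_pairs /pair_uniformC].
have [k_le1 | k_gt1] := leqP k 1.
  exists (fun=> row_and_compl (zeros_then_ones n)); split=> [l | l l' neq_ll'].
    exact/is_FR_row_and_compl/symbol_count_zeros_then_ones.
  case/negP: neq_ll'; apply/eqP/ord_inj.
  by have := ltn_ord l; have := ltn_ord l'; lia.
exists (fun l => row_and_compl (fun r => A r l)); split=> [l | l l' neq_ll'].
  have [l' neq_ll'] : exists l' : 'I_k, l != l'.
    have [->|] := eqVneq l (Ordinal (ltnW k_gt1)); first by exists (Ordinal k_gt1).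
    by exists (Ordinal (ltnW k_gt1)).
  apply/is_FR_row_and_compl => s.
  exact: symbol_count_of_pair_uniform (uniform _ _ neq_ll').
have [lambda count_ll'] := uniform l l' neq_ll'.
by exists (lambda + lambda) => a b; rewrite card_row_and_compl_pairs !count_ll'.
Qed.

Theorem mainTheorem3 (n k : nat) : 0 < n -> 0 < k ->
  (exists_MOFR k 2 (2 * n) 2 <-> exists_OA (2 * n) k 2 2).
Proof.
move=> _ _; split; [exact: exists_OA_of_MOFR | exact: exists_MOFR_of_OA].
Qed.
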